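(* Let $\phi\colon F\to G$ of type $|\alpha|\xrightarrow{\sigma}n\xleftarrow{\tau}|\beta|$ and $\psi\colon G\to H$ of type $|\beta|\xrightarrow{\eta}m\xleftarrow{\theta}|\gamma|$ be transformations, with $F\colon\mathbb B^\alpha\to\mathbb C$, $G\colon\mathbb B^\beta\to\mathbb C$, $H\colon\mathbb B^\gamma\to\mathbb C$, and let $\zeta\colon n\to l$, $\xi\colon m\to l$ be the pushout of $\tau$ and $\eta$ in finite sets, so that $\psi\circ\phi$ has type $|\alpha|\xrightarrow{\zeta\sigma}l\xleftarrow{\xi\theta}|\gamma|$. Let $i\in l$. If $\phi$ is dinatural in its $x$-th variable for every $x\in\zeta^{-1}\{i\}$, $\psi$ is dinatural in its $y$-th variable for every $y\in\xi^{-1}\{i\}$, and the $i$-th connected component of $\Gamma(\psi)\circ\Gamma(\phi)$ is acyclic, then $\psi\circ\phi$ is dinatural in its $i$-th variable.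
   Context: Notation: for $k\in\mathbb N$, $k$ also denotes $\{1,\dots,k\}$. For $\alpha\in\{+,-\}^*$, $\mathbb B^\alpha=\mathbb B^{\alpha_1}\times\cdots\times\mathbb B^{\alpha_{|\alpha|}}$ with $\mathbb B^+=\mathbb B$, $\mathbb B^-=\mathbb B^{op}$. For $\mathbf A=(A_1,\dots,A_n)$ and $\sigma\colon k\to n$, $\mathbf A\sigma=(A_{\sigma1},\dots,A_{\sigma k})$. A morphism $f\colon A\to B$ placed in a contravariant argument is regarded as a morphism $B\to A$ of $\mathbb B^{op}$. A transformation $\phi\colon F\to G$ of type $|\alpha|\xrightarrow{\sigma}n\xleftarrow{\tau}|\beta|$ ($\sigma,\tau$ arbitrary functions) is a family $\phi_{\mathbf A}\colon F(\mathbf A\sigma)\to G(\mathbf A\tau)$, $\mathbf A\in\mathrm{Ob}(\mathbb B)^n$; $A_i$ is its $i$-th variable. $\mathbf A[X,Y/i]\sigma$ is the tuple whose $j$-th entry is $X$ if $\sigma j=i,\alpha_j=-$, $Y$ if $\sigma j=i,\alpha_j=+$, and $A_{\sigma j}$ (or $1_{A_{\sigma j}}$ when $X,Y$ are morphisms) otherwise; $\mathbf A[X/i]=\mathbf A[X,X/i]$. $\phi$ is dinatural in its $i$-th variable if for all objects $A_j$ ($j\neq i$) and all $f\colon A\to B$: $G(\mathbf A[A,f/i]\tau)\circ\phi_{\mathbf A[A/i]}\circ F(\mathbf A[f,A/i]\sigma)=G(\mathbf A[f,B/i]\tau)\circ\phi_{\mathbf A[B/i]}\circ F(\mathbf A[B,f/i]\sigma)$.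 Vertical composite: $(\psi\circ\phi)_{\mathbf A}=\psi_{\mathbf A\xi}\circ\phi_{\mathbf A\zeta}$ for $\mathbf A\in\mathrm{Ob}(\mathbb B)^l$. Composite graph $\Gamma(\psi)\circ\Gamma(\phi)$: directed bipartite graph with places the disjoint union of $|\alpha|,|\beta|,|\gamma|$ and transitions $n\sqcup m$. For $t\in n$: arc from place $j$ of the $\alpha$-block to $t$ iff $\sigma j=t,\alpha_j=+$; from $t$ to it iff $\sigma j=t,\alpha_j=-$; arc from place $j$ of the $\beta$-block to $t$ iff $\tau j=t,\beta_j=-$; from $t$ to it iff $\tau j=t,\beta_j=+$. For $t\in m$: arc from place $j$ of the $\beta$-block to $t$ iff $\eta j=t,\beta_j=+$; from $t$ to it iff $\eta j=t,\beta_j=-$; arc from place $j$ of the $\gamma$-block to $t$ iff $\theta j=t,\gamma_j=-$; from $t$ to it iff $\theta j=t,\gamma_j=+$. Its connected components correspond bijectively to $l$: the $i$-th component is the one containing the transitions $t\in n$ with $\zeta t=i$ and $t\in m$ with $\xi t=i$. Acyclic means without directed cycles. *)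

From mathcomp Require Import all_boot.
Set Implicit Arguments. Unset Strict Implicit. Unset Printing Implicit Defensive.

Record Category := {
  Ob : Type;
  Hom : Ob -> Ob -> Type;
  idm : forall X, Hom X X;
  comp : forall X Y Z, Hom Y Z -> Hom X Y -> Hom X Z;
  comp_assoc : forall X Y Z W (h : Hom Z W) (g : Hom Y Z) (f : Hom X Y),
      comp h (comp g f) = comp (comp h g) f;
  comp_id_l : forall X Y (f : Hom X Y), comp (idm Y) f = f;
  comp_id_r : forall X Y (f : Hom X Y), comp f (idm X) = f }.
Arguments idm {c} X.
Arguments comp {c X Y Z} g f.
Arguments Hom {c} X Y.

(* Morphisms of B^+ = B (b = true) or of B^- = B^op (b = false). *)
Definition vHom (C : Category) (b : bool) (X Y : Ob C) : Type :=
  if b then Hom X Y else Hom Y X.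
Arguments vHom : clear implicits.

Definition vid (C : Category) (b : bool) (X : Ob C) : vHom C b X X :=
  if b as b' return vHom C b' X X then idm X else idm X.
Arguments vid : clear implicits.

Definition vcomp (C : Category) (b : bool) (X Y Z : Ob C) :
  vHom C b Y Z -> vHom C b X Y -> vHom C b X Z :=
  if b as b' return vHom C b' Y Z -> vHom C b' X Y -> vHom C b' X Z
  then fun g f => comp g f else fun g f => comp f g.

Record MFunctor (B C : Category) (k : nat) (var : 'I_k -> bool) := {
  fobj : ('I_k -> Ob B) -> Ob C;
  fmor : forall S T : 'I_k -> Ob B,
      (forall j, vHom B (var j) (S j) (T j)) -> Hom (fobj S) (fobj T);
  fmor_id : forall S, fmor (fun j => vid B (var j) (S j)) = idm (fobj S);
  fmor_comp : forall S T U (f : forall j, vHom B (var j) (S j) (T j))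
                           (g : forall j, vHom B (var j) (T j) (U j)),
      fmor (fun j => vcomp (g j) (f j)) = comp (fmor g) (fmor f) }.
Arguments fobj {B C k var} m S.
Arguments fmor {B C k var} m {S T} _.

Definition transf (B C : Category) (a : nat) (alpha : 'I_a -> bool)
  (b : nat) (beta : 'I_b -> bool) (F : MFunctor B C alpha) (G : MFunctor B C beta)
  (n : nat) (sigma : 'I_a -> 'I_n) (tau : 'I_b -> 'I_n) : Type :=
  forall A : 'I_n -> Ob B,
    Hom (fobj F (fun j => A (sigma j))) (fobj G (fun j => A (tau j))).

Definition upd (B : Category) (n : nat) (A : 'I_n -> Ob B) (i : 'I_n) (X : Ob B)
  : 'I_n -> Ob B := fun k => if k == i then X else A k.

Definition subObj (B : Category) (k : nat) (var : 'I_k -> bool) (n : nat)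
  (A : 'I_n -> Ob B) (i : 'I_n) (sig : 'I_k -> 'I_n) (N P : Ob B) : 'I_k -> Ob B :=
  fun j => if sig j == i then (if var j then P else N) else A (sig j).

(* Morphism A[fn,fp/i]sig : A[N,P/i]sig -> A[Z/i]sig of B^var, where fp : P -> Z
   sits in the covariant slots, fn : Z -> N (i.e. N -> Z in B^op) in the
   contravariant ones, and identities elsewhere. *)
Definition inMor (B : Category) (k : nat) (var : 'I_k -> bool) (n : nat)
  (A : 'I_n -> Ob B) (i : 'I_n) (sig : 'I_k -> 'I_n) (N P Z : Ob B)
  (fp : Hom P Z) (fn : Hom Z N) :
  forall j, vHom B (var j) (subObj var A i sig N P j) (upd A i Z (sig j)) :=
  fun j =>
  if sig j == i as c return
     vHom B (var j) (if c then (if var j then P else N) else A (sig j))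
                    (if c then Z else A (sig j))
  then (if var j as bb return vHom B bb (if bb then P else N) Z
        then fp else fn)
  else vid B (var j) (A (sig j)).

Definition outMor (B : Category) (k : nat) (var : 'I_k -> bool) (n : nat)
  (A : 'I_n -> Ob B) (i : 'I_n) (sig : 'I_k -> 'I_n) (N P Z : Ob B)
  (fp : Hom Z P) (fn : Hom N Z) :
  forall j, vHom B (var j) (upd A i Z (sig j)) (subObj var A i sig N P j) :=
  fun j =>
  if sig j == i as c return
     vHom B (var j) (if c then Z else A (sig j))
                    (if c then (if var j then P else N) else A (sig j))
  then (if var j as bb return vHom B bb Z (if bb then P else N)
        then fp else fn)
  else vid B (var j) (A (sig j)).

Definition dinatural_in (B C : Category) (a : nat) (alpha : 'I_a -> bool)
  (b : nat) (beta : 'I_b -> bool) (F : MFunctor B C alpha) (G : MFunctor B C beta)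
  (n : nat) (sigma : 'I_a -> 'I_n) (tau : 'I_b -> 'I_n)
  (phi : transf F G sigma tau) (i : 'I_n) : Prop :=
  forall (A : 'I_n -> Ob B) (X Y : Ob B) (f : Hom X Y),
    comp (fmor G (outMor beta A i tau f (idm X)))
         (comp (phi (upd A i X)) (fmor F (inMor alpha A i sigma (idm X) f)))
    =
    comp (fmor G (outMor beta A i tau (idm Y) f))
         (comp (phi (upd A i Y)) (fmor F (inMor alpha A i sigma f (idm Y)))).

Definition is_pushout (b n m l : nat) (tau : 'I_b -> 'I_n) (eta : 'I_b -> 'I_m)
  (zeta : 'I_n -> 'I_l) (xi : 'I_m -> 'I_l) : Prop :=
  (forall j, zeta (tau j) = xi (eta j)) /\
  forall (T : finType) (z' : 'I_n -> T) (x' : 'I_m -> T),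
    (forall j, z' (tau j) = x' (eta j)) ->
    (exists u : 'I_l -> T, (forall t, u (zeta t) = z' t) /\ (forall t, u (xi t) = x' t))
    /\ (forall u v : 'I_l -> T,
          (forall t, u (zeta t) = z' t) -> (forall t, u (xi t) = x' t) ->
          (forall t, v (zeta t) = z' t) -> (forall t, v (xi t) = x' t) ->
          forall s, u s = v s).

Definition castTgt (C : Category) (X Y Y' : Ob C) (e : Y = Y') (f : Hom X Y)
  : Hom X Y' := eq_rect Y (fun Z => Hom X Z) f Y' e.

Definition vcompT (B C : Category) (a : nat) (alpha : 'I_a -> bool)
  (b : nat) (beta : 'I_b -> bool) (c : nat) (gamma : 'I_c -> bool)
  (F : MFunctor B C alpha) (G : MFunctor B C beta) (H : MFunctor B C gamma)
  (n m l : nat) (sigma : 'I_a -> 'I_n) (tau : 'I_b -> 'I_n)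
  (eta : 'I_b -> 'I_m) (theta : 'I_c -> 'I_m)
  (zeta : 'I_n -> 'I_l) (xi : 'I_m -> 'I_l)
  (Hc : (fun j => zeta (tau j)) = (fun j => xi (eta j)))
  (phi : transf F G sigma tau) (psi : transf G H eta theta)
  : transf F H (fun j => zeta (sigma j)) (fun j => xi (theta j)) :=
  fun A => comp (psi (fun k => A (xi k)))
    (castTgt (f_equal (fun h : 'I_b -> 'I_l => fobj G (fun j => A (h j))) Hc)
             (phi (fun k => A (zeta k)))).

(* vertices: places 'I_a + 'I_b + 'I_c (alpha-, beta-, gamma-blocks),
   transitions 'I_n + 'I_m *)
Definition cedge (a b c n m : nat) (alpha : 'I_a -> bool) (beta : 'I_b -> bool)
  (gamma : 'I_c -> bool) (sigma : 'I_a -> 'I_n) (tau : 'I_b -> 'I_n)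
  (eta : 'I_b -> 'I_m) (theta : 'I_c -> 'I_m)
  (x y : ('I_a + 'I_b + 'I_c) + ('I_n + 'I_m)) : bool :=
  match x, y with
  | inl (inl (inl j)), inr (inl t) => (sigma j == t) && alpha j
  | inr (inl t), inl (inl (inl j)) => (sigma j == t) && ~~ alpha j
  | inl (inl (inr j)), inr (inl t) => (tau j == t) && ~~ beta j
  | inr (inl t), inl (inl (inr j)) => (tau j == t) && beta j
  | inl (inl (inr j)), inr (inr t) => (eta j == t) && beta j
  | inr (inr t), inl (inl (inr j)) => (eta j == t) && ~~ beta j
  | inl (inr j), inr (inr t) => (theta j == t) && ~~ gamma j
  | inr (inr t), inl (inr j) => (theta j == t) && gamma j
  | _, _ => false
  end.

Definition trans_label (a b c n m l : nat) (zeta : 'I_n -> 'I_l) (xi : 'I_m -> 'I_l)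
  (i : 'I_l) (x : ('I_a + 'I_b + 'I_c) + ('I_n + 'I_m)) : bool :=
  match x with
  | inr (inl t) => zeta t == i
  | inr (inr t) => xi t == i
  | inl _ => false
  end.

Definition component_acyclic (a b c n m l : nat) (alpha : 'I_a -> bool)
  (beta : 'I_b -> bool) (gamma : 'I_c -> bool) (sigma : 'I_a -> 'I_n)
  (tau : 'I_b -> 'I_n) (eta : 'I_b -> 'I_m) (theta : 'I_c -> 'I_m)
  (zeta : 'I_n -> 'I_l) (xi : 'I_m -> 'I_l) (i : 'I_l) : Prop :=
  let e := cedge alpha beta gamma sigma tau eta theta in
  forall v w : ('I_a + 'I_b + 'I_c) + ('I_n + 'I_m),
    (exists t, trans_label zeta xi i t /\
               connect (fun x y => e x y || e y x) t v) ->
    e v w -> ~~ connect e w v.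

(* Fix f : X -> Y in B and a variable i of psi o phi.  Each transition of
   Gamma(phi) or Gamma(psi) in the i-th component carries a state, X (false)
   or Y (true); variables outside the component carry the entries of A.  A
   marking is monotone when along every place of G in the component the state
   never decreases in the direction given by the place's variance; the
   morphisms idm X, f, idm Y then fill all F-, G- and H-slots and yield an
   "interpolant" between the source of the lower and the target of the upper
   path of the dinaturality square of psi o phi at i.
   - The all-X and all-Y markings give the two sides of that square
     (interpolant_const).
   - Dinaturality of phi (or psi) in one variable says that flipping that
     transition from X to Y leaves the interpolant unchanged, as long as both
     markings are monotone (interpolant_flip_phi/_psi, instances of the
     abstract dinatural_in_context).
   - Acyclicity lets one always flip some transition still in state X
     (flippable, via acyclic_min_source): one whose downstream neighbours are
     all in state Y.  Induction on their number joins the two sides.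
   This is the token game on the composite Petri net. *)

From Pilot Require Import Defs.
From mathcomp Require Import all_boot.
From Stdlib Require Import ProofIrrelevance FunctionalExtensionality JMeq.
Set Implicit Arguments. Unset Strict Implicit. Unset Printing Implicit Defensive.
(* ssrfun also has a [comp]; here it is composition in a category. *)
Local Notation comp := Defs.comp.

Lemma vcomp_vid_l (B : Category) (bb : bool) (X Y : Ob B) (u : vHom B bb X Y) :
  vcomp (vid B bb Y) u = u.
Proof. by case: bb u => u /=; rewrite ?comp_id_l ?comp_id_r. Qed.

Lemma vcomp_vid_r (B : Category) (bb : bool) (X Y : Ob B) (u : vHom B bb X Y) :
  vcomp u (vid B bb X) = u.
Proof. by case: bb u => u /=; rewrite ?comp_id_l ?comp_id_r. Qed.

Definition castv (B : Category) (bb : bool) (O1 O2 : Ob B) (e : O1 = O2) :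
  vHom B bb O1 O2 := eq_rect O1 (vHom B bb O1) (vid B bb O1) O2 e.

Lemma vcomp_castv_l (B : Category) (bb : bool) (O1 O2 O3 : Ob B) (e : O2 = O3)
  (u : vHom B bb O1 O2) : JMeq (vcomp (castv bb e) u) u.
Proof. by case: _ / e; rewrite vcomp_vid_l. Qed.

Lemma vcomp_castv_r (B : Category) (bb : bool) (O1 O2 O3 : Ob B) (e : O1 = O2)
  (u : vHom B bb O2 O3) : JMeq (vcomp u (castv bb e)) u.
Proof. by case: _ / e in u *; rewrite vcomp_vid_r. Qed.

Lemma vfamily_JMeq k (B : Category) (var : 'I_k -> bool) (S T : 'I_k -> Ob B)
  (g g' : forall j, vHom B (var j) (S j) (T j)) :
  (forall j, JMeq (g j) (g' j)) -> g = g'.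
Proof. by move=> hg; apply: functional_extensionality_dep => j; apply: JMeq_eq. Qed.

Section TwoStateChain.
(* A morphism f : X -> Y and the two-point chain X --f--> Y indexed by a
   "state" z : bool (false = X, true = Y).  up z : X -> ob z and
   dn z : ob z -> Y are the two halves of f, and step connects two states
   in the direction prescribed by a variance. *)
Variables (B : Category) (X Y : Ob B) (f : Hom X Y).

Definition ob (z : bool) : Ob B := if z then Y else X.

Definition up (z : bool) : Hom X (ob z) :=
  if z as z' return Hom X (ob z') then f else idm X.

Definition dn (z : bool) : Hom (ob z) Y :=
  if z as z' return Hom (ob z') Y then idm Y else f.

Definition le_var (bb x y : bool) : bool := if bb then x ==> y else y ==> x.

Lemma le_var_refl (bb z : bool) : le_var bb z z.
Proof. by case: bb; rewrite /le_var implybb. Qed.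

Definition stepH (x y : bool) : x ==> y -> Hom (ob x) (ob y) :=
  match x, y return x ==> y -> Hom (ob x) (ob y) with
  | false, false => fun _ => idm X
  | false, true => fun _ => f
  | true, true => fun _ => idm Y
  | true, false => fun h => match notF h with end
  end.

Definition step (bb x y : bool) : le_var bb x y -> vHom B bb (ob x) (ob y) :=
  if bb as bb' return le_var bb' x y -> vHom B bb' (ob x) (ob y)
  then stepH (x:=x) (y:=y) else stepH (x:=y) (y:=x).

Lemma step_refl (bb z : bool) (h : le_var bb z z) : step h = vid B bb (ob z).
Proof. by case: bb h; case: z. Qed.

(* The two sides of the dinaturality square of T in its t-th variable,
   indexed by the state z of that variable. *)
Definition side (C : Category) k1 (var1 : 'I_k1 -> bool) k2 (var2 : 'I_k2 -> bool)
  (F1 : MFunctor B C var1) (G1 : MFunctor B C var2) N (s1 : 'I_k1 -> 'I_N)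
  (s2 : 'I_k2 -> 'I_N) (T : transf F1 G1 s1 s2) (t : 'I_N) (A' : 'I_N -> Ob B)
  (z : bool) : Hom (fobj F1 (subObj var1 A' t s1 Y X)) (fobj G1 (subObj var2 A' t s2 X Y)) :=
  comp (fmor G1 (outMor var2 A' t s2 (dn z) (up z)))
       (comp (T (upd A' t (ob z))) (fmor F1 (inMor var1 A' t s1 (up z) (dn z)))).

Lemma side_dinatural (C : Category) k1 (var1 : 'I_k1 -> bool) k2
  (var2 : 'I_k2 -> bool) (F1 : MFunctor B C var1) (G1 : MFunctor B C var2) N
  (s1 : 'I_k1 -> 'I_N) (s2 : 'I_k2 -> 'I_N) (T : transf F1 G1 s1 s2) (t : 'I_N)
  (A' : 'I_N -> Ob B) :
  dinatural_in T t -> side T t A' false = side T t A' true.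
Proof. by move=> Dt; apply: Dt. Qed.

Lemma dinatural_in_context (C : Category) k1 (var1 : 'I_k1 -> bool) k2
  (var2 : 'I_k2 -> bool) (F1 : MFunctor B C var1) (G1 : MFunctor B C var2) N
  (s1 : 'I_k1 -> 'I_N) (s2 : 'I_k2 -> 'I_N) (T : transf F1 G1 s1 s2) (t : 'I_N)
  (A' : 'I_N -> Ob B) (V : bool -> 'I_N -> Ob B)
  (eV : forall z, upd A' t (ob z) = V z)
  (SF : 'I_k1 -> Ob B) (TG : 'I_k2 -> Ob B)
  (fin : forall z j, vHom B (var1 j) (SF j) (V z (s1 j)))
  (gout : forall z j, vHom B (var2 j) (V z (s2 j)) (TG j))
  (fr : forall j, vHom B (var1 j) (SF j) (subObj var1 A' t s1 Y X j))
  (gr : forall j, vHom B (var2 j) (subObj var2 A' t s2 X Y j) (TG j)) :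
  dinatural_in T t ->
  (forall z j, JMeq (fin z j) (vcomp (inMor var1 A' t s1 (up z) (dn z) j) (fr j))) ->
  (forall z j, JMeq (gout z j) (vcomp (gr j) (outMor var2 A' t s2 (dn z) (up z) j))) ->
  comp (fmor G1 (gout false)) (comp (T (V false)) (fmor F1 (fin false))) =
  comp (fmor G1 (gout true)) (comp (T (V true)) (fmor F1 (fin true))).
Proof.
move=> Dt hfin hgout.
have factor z : comp (fmor G1 (gout z)) (comp (T (V z)) (fmor F1 (fin z))) =
                comp (fmor G1 gr) (comp (side T t A' z) (fmor F1 fr)).
  move: (fin z) (gout z) (hfin z) (hgout z); case: (V z) / (eV z) => fz gz hf hg.
  rewrite (vfamily_JMeq hf) (vfamily_JMeq hg) /side !fmor_comp.
  by rewrite -!comp_assoc; congr (comp _ _); rewrite !comp_assoc.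
by rewrite !factor side_dinatural.
Qed.

End TwoStateChain.

Definition mark k (s : 'I_k -> bool) (t : 'I_k) (z : bool) : 'I_k -> bool :=
  fun p => if p == t then z else s p.

Lemma mark_id k (s : 'I_k -> bool) (t : 'I_k) : mark s t (s t) = s.
Proof. by apply: functional_extensionality => p; rewrite /mark; case: eqP => // ->. Qed.

Section Slots.
(* Objects and morphisms of B attached to the variables of a transformation
   whose labels lie in 'I_l: a variable labelled by i carries the state of the
   chain X --f--> Y, any other variable labelled L carries A L. *)
Variables (B : Category) (l : nat) (i : 'I_l) (A : 'I_l -> Ob B)
  (X Y : Ob B) (f : Hom X Y).

Definition obL (L : 'I_l) (z : bool) : Ob B := if L == i then ob X Y z else A L.

Definition BIn (L : 'I_l) (bb : bool) : Ob B :=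
  if L == i then (if bb then X else Y) else A L.
Definition BOut (L : 'I_l) (bb : bool) : Ob B :=
  if L == i then (if bb then Y else X) else A L.

Definition inslot (L : 'I_l) (bb z : bool) : vHom B bb (BIn L bb) (obL L z) :=
  if L == i as cc return
    vHom B bb (if cc then (if bb then X else Y) else A L) (if cc then ob X Y z else A L)
  then (if bb as bb' return vHom B bb' (if bb' then X else Y) (ob X Y z)
        then up f z else dn f z)
  else vid B bb (A L).

Definition outslot (L : 'I_l) (bb z : bool) : vHom B bb (obL L z) (BOut L bb) :=
  if L == i as cc return
    vHom B bb (if cc then ob X Y z else A L) (if cc then (if bb then Y else X) else A L)
  then (if bb as bb' return vHom B bb' (ob X Y z) (if bb' then Y else X)
        then dn f z else up f z)
  else vid B bb (A L).

Definition midslot (L1 L2 : 'I_l) (e : L1 = L2) (bb x y : bool)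
  (hm : L1 == i -> le_var bb x y) : vHom B bb (obL L1 x) (obL L2 y) :=
  match e in _ = L2' return vHom B bb (obL L1 x) (obL L2' y) with
  | erefl =>
    (if L1 == i as cc return (cc -> le_var bb x y) ->
        vHom B bb (if cc then ob X Y x else A L1) (if cc then ob X Y y else A L1)
     then fun h => step f (h isT) else fun _ => vid B bb (A L1)) hm
  end.

Lemma inslot_in (L : 'I_l) (bb z : bool) : L == i ->
  JMeq (inslot L bb z) (if bb as bb' return vHom B bb' (if bb' then X else Y) (ob X Y z)
                        then up f z else dn f z).
Proof. by rewrite /inslot /obL /BIn => ->. Qed.

Lemma outslot_in (L : 'I_l) (bb z : bool) : L == i ->
  JMeq (outslot L bb z) (if bb as bb' return vHom B bb' (ob X Y z) (if bb' then Y else X)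
                         then dn f z else up f z).
Proof. by rewrite /outslot /obL /BOut => ->. Qed.

Lemma midslot_in (L1 L2 : 'I_l) (e : L1 = L2) (bb x y : bool)
  (hm : L1 == i -> le_var bb x y) (h : L1 == i) : JMeq (midslot e hm) (step f (hm h)).
Proof.
case: _ / e; move: hm h; rewrite /midslot /obL.
by case: (L1 == i) => // hm h /=; rewrite (eq_irrelevance h isT).
Qed.

Lemma midslot_out (L1 L2 : 'I_l) (e : L1 = L2) (bb x y : bool)
  (hm : L1 == i -> le_var bb x y) : (L1 == i) = false ->
  JMeq (midslot e hm) (vid B bb (A L1)).
Proof. by move=> h; case: _ / e; move: hm; rewrite /midslot /obL h. Qed.

Lemma inslot_ext (L : 'I_l) (bb x y : bool) : (L == i -> x = y) ->
  JMeq (inslot L bb x) (inslot L bb y).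
Proof.
rewrite /inslot /obL /BIn; case: (L == i) => h //=.
by rewrite (h isT).
Qed.

Lemma outslot_ext (L : 'I_l) (bb x y : bool) : (L == i -> x = y) ->
  JMeq (outslot L bb x) (outslot L bb y).
Proof.
rewrite /outslot /obL /BOut; case: (L == i) => h //=.
by rewrite (h isT).
Qed.

Lemma midslot_ext (L1 L2 : 'I_l) (e : L1 = L2) (bb x y x' y' : bool)
  (hm : L1 == i -> le_var bb x y) (hm' : L1 == i -> le_var bb x' y') :
  (L1 == i -> x = x' /\ y = y') -> JMeq (midslot e hm) (midslot e hm').
Proof.
case E: (L1 == i) => h; last first.
  exact: JMeq_trans (midslot_out e hm E) (JMeq_sym (midslot_out e hm' E)).
apply: JMeq_trans (midslot_in e hm E) (JMeq_trans _ (JMeq_sym (midslot_in e hm' E))).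
move: (hm E) (hm' E); case: (h isT) => -> -> h1 h2.
by rewrite (eq_irrelevance h1 h2).
Qed.

Lemma step_from_start (bb y z : bool) (h : le_var bb y z) : y = ~~ bb ->
  JMeq (step f h) (if bb as bb' return vHom B bb' (if bb' then X else Y) (ob X Y z)
                   then up f z else dn f z).
Proof. by move=> ey; subst y; case: bb h; case: z. Qed.

Lemma step_to_end (bb y z : bool) (h : le_var bb z y) : y = bb ->
  JMeq (step f h) (if bb as bb' return vHom B bb' (ob X Y z) (if bb' then Y else X)
                   then dn f z else up f z).
Proof. by move=> ey; subst y; case: bb h; case: z. Qed.

Definition marked N (lab : 'I_N -> 'I_l) (s : 'I_N -> bool) (p : 'I_N) : Ob B :=
  obL (lab p) (s p).

Lemma marked_mark N (lab : 'I_N -> 'I_l) (s : 'I_N -> bool) (t : 'I_N) (z : bool) :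
  lab t = i -> upd (marked lab s) t (ob X Y z) = marked lab (mark s t z).
Proof.
move=> ht; apply: functional_extensionality => p; rewrite /upd /marked /mark.
by case: eqP => // ->; rewrite /obL ht eqxx.
Qed.

Lemma inslot_factor N (lab : 'I_N -> 'I_l) k (var : 'I_k -> bool)
  (sig : 'I_k -> 'I_N) (t : 'I_N) (s : 'I_N -> bool) (j : 'I_k) : lab t = i ->
  {fr : vHom B (var j) (BIn (lab (sig j)) (var j)) (subObj var (marked lab s) t sig Y X j) |
   forall z, JMeq (inslot (lab (sig j)) (var j) (mark s t z (sig j)))
                  (vcomp (inMor var (marked lab s) t sig (up f z) (dn f z) j) fr)}.
Proof.
move=> ht; rewrite /subObj /inMor /mark /upd.
case E: (sig j == t); last first.
  by exists (inslot (lab (sig j)) (var j) (s (sig j))) => z /=; rewrite vcomp_vid_l.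
have hL : lab (sig j) == i by rewrite (eqP E) ht.
have eIn : BIn (lab (sig j)) (var j) = (if var j then X else Y) by rewrite /BIn hL.
exists (castv (var j) eIn) => z /=.
exact: JMeq_trans (inslot_in _ _ hL) (JMeq_sym (vcomp_castv_r _ _)).
Qed.

Lemma outslot_factor N (lab : 'I_N -> 'I_l) k (var : 'I_k -> bool)
  (sig : 'I_k -> 'I_N) (t : 'I_N) (s : 'I_N -> bool) (j : 'I_k) : lab t = i ->
  {gr : vHom B (var j) (subObj var (marked lab s) t sig X Y j) (BOut (lab (sig j)) (var j)) |
   forall z, JMeq (outslot (lab (sig j)) (var j) (mark s t z (sig j)))
                  (vcomp gr (outMor var (marked lab s) t sig (dn f z) (up f z) j))}.
Proof.
move=> ht; rewrite /subObj /outMor /mark /upd.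
case E: (sig j == t); last first.
  by exists (outslot (lab (sig j)) (var j) (s (sig j))) => z /=; rewrite vcomp_vid_r.
have hL : lab (sig j) == i by rewrite (eqP E) ht.
have eOut : (if var j then Y else X) = BOut (lab (sig j)) (var j) by rewrite /BOut hL.
exists (castv (var j) eOut) => z /=.
exact: JMeq_trans (outslot_in _ _ hL) (JMeq_sym (vcomp_castv_l _ _)).
Qed.

End Slots.

Lemma castTgt_comp (C : Category) (Z U U' : Ob C) (e : U = U') (h : Hom Z U) :
  castTgt e h = comp (castTgt e (idm U)) h.
Proof. by case: _ / e; rewrite /= comp_id_l. Qed.

Lemma fmor_cast (B C : Category) k (var : 'I_k -> bool) (G1 : MFunctor B C var)
  (S T : 'I_k -> Ob B) (g : forall j, vHom B (var j) (S j) (T j))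
  (E : fobj G1 S = fobj G1 T) : S = T ->
  (forall j, JMeq (g j) (vid B (var j) (S j))) -> fmor G1 g = castTgt E (idm _).
Proof.
move=> e; case: _ / e in g E * => hg.
by rewrite (vfamily_JMeq hg) fmor_id (proof_irrelevance _ E erefl).
Qed.

(* Along a finite relation, some vertex of P has no vertex of P two steps
   downstream, provided no vertex of P lies on a cycle: take one with the
   fewest reachable vertices. *)
Lemma acyclic_min_source (T : finType) (e : rel T) (P : pred T) (v0 : T) :
  (forall v w, P v -> e v w -> ~~ connect e w v) -> P v0 ->
  exists2 v, P v & forall p w, e v p -> e p w -> ~~ P w.
Proof.
move=> acyc Pv0.
have [v Pv minv] := arg_minnP (fun v => #|[set w | connect e v w]|) Pv0.
exists v => // p w evp epw; apply/negP => Pw.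
have : #|[set x | connect e w x]| < #|[set x | connect e v x]|.
  apply: proper_card; apply/properP; split.
    apply/subsetP => x; rewrite !inE => hwx.
    exact: connect_trans (connect1 evp) (connect_trans (connect1 epw) hwx).
  exists v; rewrite !inE ?connect0 //; apply/negP => hwv.
  by move/negP: (acyc v p Pv evp); apply; apply: connect_trans (connect1 epw) hwv.
by rewrite ltnNge minv.
Qed.

Section Composite.
Variables (B C : Category)
  (a : nat) (alpha : 'I_a -> bool) (b : nat) (beta : 'I_b -> bool)
  (c : nat) (gamma : 'I_c -> bool)
  (F : MFunctor B C alpha) (G : MFunctor B C beta) (H : MFunctor B C gamma)
  (n m l : nat) (sigma : 'I_a -> 'I_n) (tau : 'I_b -> 'I_n)
  (eta : 'I_b -> 'I_m) (theta : 'I_c -> 'I_m)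
  (phi : transf F G sigma tau) (psi : transf G H eta theta)
  (zeta : 'I_n -> 'I_l) (xi : 'I_m -> 'I_l)
  (Hc : (fun j => zeta (tau j)) = (fun j => xi (eta j)))
  (i : 'I_l) (A : 'I_l -> Ob B) (X Y : Ob B) (f : Hom X Y).

Local Notation obL := (obL i A X Y).
Local Notation BIn := (BIn i A X Y).
Local Notation BOut := (BOut i A X Y).
Local Notation inslot := (inslot i A f).
Local Notation outslot := (outslot i A f).
Local Notation midslot := (midslot A f).
Local Notation marked := (marked i A X Y).

Definition ej (j : 'I_b) : zeta (tau j) = xi (eta j) := f_equal (fun h => h j) Hc.

(* A marking s of the transitions of phi and r of those of psi is monotone
   when every G-place of component i leads from an earlier to a later state
   along its variance; then the slots of G in the interpolant exist. *)
Definition monotone (s : 'I_n -> bool) (r : 'I_m -> bool) : Prop :=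
  forall j, zeta (tau j) == i -> le_var (beta j) (s (tau j)) (r (eta j)).

Lemma monotone_const (z : bool) : monotone (fun _ => z) (fun _ => z).
Proof. by move=> j _; apply: le_var_refl. Qed.

Definition interpolant (s : 'I_n -> bool) (r : 'I_m -> bool) (hm : monotone s r) :
  Hom (fobj F (fun j => BIn (zeta (sigma j)) (alpha j)))
      (fobj H (fun j => BOut (xi (theta j)) (gamma j))) :=
  comp (fmor H (fun j => outslot (xi (theta j)) (gamma j) (r (theta j))))
   (comp (psi (marked xi r))
    (comp (fmor G (fun j => midslot (ej j) (hm j)))
     (comp (phi (marked zeta s))
       (fmor F (fun j => inslot (zeta (sigma j)) (alpha j) (s (sigma j))))))).

Lemma midslot_refl (L1 L2 : 'I_l) (e : L1 = L2) (bb z : bool)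
  (hm : L1 == i -> le_var bb z z) : JMeq (midslot e hm) (vid B bb (obL L1 z)).
Proof.
case: _ / e; move: hm; rewrite /midslot /obL.
by case: (L1 == i) => hm //=; rewrite step_refl.
Qed.

Lemma interpolant_const (z : bool) :
  interpolant (monotone_const z) = side f (vcompT Hc phi psi) i A z.
Proof.
rewrite /interpolant /side /vcompT castTgt_comp -!comp_assoc.
congr (comp _ (comp _ (comp _ _))); apply: fmor_cast => [|j].
  by apply: functional_extensionality => j; rewrite /marked (ej j).
exact: midslot_refl.
Qed.

(* Both
   flipped markings being monotone forces each G-place after t to end in the
   extreme state of its variance. *)
Lemma midslot_factor_src (t : 'I_n) (s : 'I_n -> bool) (r : 'I_m -> bool)
  (j : 'I_b) : zeta t = i ->
  monotone (mark s t false) r -> monotone (mark s t true) r ->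
  {gr : vHom B (beta j) (subObj beta (marked zeta s) t tau X Y j) (marked xi r (eta j)) |
   forall z (hz : zeta (tau j) == i -> le_var (beta j) (mark s t z (tau j)) (r (eta j))),
     JMeq (midslot (ej j) hz)
          (vcomp gr (outMor beta (marked zeta s) t tau (dn f z) (up f z) j))}.
Proof.
move=> ht h0 h1; move: (h0 j) (h1 j); rewrite /subObj /outMor /mark /upd.
case E: (tau j == t) => /= hj0 hj1; last first.
  exists (midslot (ej j) hj0) => z /= hz.
  by rewrite vcomp_vid_r (proof_irrelevance _ hz hj0).
have hL : zeta (tau j) == i by rewrite (eqP E) ht.
have hr : r (eta j) = beta j.
  by move: (hj0 hL) (hj1 hL); rewrite /le_var; case: (beta j); case: (r (eta j)).
have eOut : (if beta j then Y else X) = marked xi r (eta j).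
  by rewrite /marked /obL -(ej j) hL hr.
exists (castv (beta j) eOut) => z /= hz.
apply: JMeq_trans (midslot_in A f _ _ hL) _.
exact: JMeq_trans (step_to_end f _ hr) (JMeq_sym (vcomp_castv_l _ _)).
Qed.

Lemma midslot_factor_tgt (u : 'I_m) (s : 'I_n -> bool) (r : 'I_m -> bool)
  (j : 'I_b) : xi u = i ->
  monotone s (mark r u false) -> monotone s (mark r u true) ->
  {fr : vHom B (beta j) (marked zeta s (tau j)) (subObj beta (marked xi r) u eta Y X j) |
   forall z (hz : zeta (tau j) == i -> le_var (beta j) (s (tau j)) (mark r u z (eta j))),
     JMeq (midslot (ej j) hz)
          (vcomp (inMor beta (marked xi r) u eta (up f z) (dn f z) j) fr)}.
Proof.
move=> hu h0 h1; move: (h0 j) (h1 j); rewrite /subObj /inMor /mark /upd.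
case E: (eta j == u) => /= hj0 hj1; last first.
  exists (midslot (ej j) hj0) => z /= hz.
  by rewrite vcomp_vid_l (proof_irrelevance _ hz hj0).
have hL : zeta (tau j) == i by rewrite (ej j) (eqP E) hu.
have hs : s (tau j) = ~~ beta j.
  by move: (hj0 hL) (hj1 hL); rewrite /le_var; case: (beta j); case: (s (tau j)).
have eIn : marked zeta s (tau j) = (if beta j then X else Y).
  by rewrite /marked /obL hL hs; case: (beta j).
exists (castv (beta j) eIn) => z /= hz.
apply: JMeq_trans (midslot_in A f _ _ hL) _.
exact: JMeq_trans (step_from_start f _ hs) (JMeq_sym (vcomp_castv_r _ _)).
Qed.

Lemma interpolant_flip_phi (t : 'I_n) (s : 'I_n -> bool) (r : 'I_m -> bool)
  (h0 : monotone (mark s t false) r) (h1 : monotone (mark s t true) r) :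
  zeta t = i -> dinatural_in phi t -> interpolant h0 = interpolant h1.
Proof.
move=> ht Dt.
pose hz z : monotone (mark s t z) r :=
  if z as z' return monotone (mark s t z') r then h1 else h0.
rewrite /interpolant; congr (comp _ (comp _ _)).
apply: (dinatural_in_context (V := fun z => marked zeta (mark s t z))
  (fin := fun z j => inslot (zeta (sigma j)) (alpha j) (mark s t z (sigma j)))
  (gout := fun z j => midslot (ej j) (hz z j))
  (fr := fun j => sval (inslot_factor A f alpha sigma s j ht))
  (gr := fun j => sval (midslot_factor_src j ht h0 h1))
  (fun z => marked_mark A X Y s z ht) Dt).
- by move=> z j; apply: (svalP (inslot_factor A f alpha sigma s j ht)).
- by move=> z j; apply: (svalP (midslot_factor_src j ht h0 h1)).
Qed.

Lemma interpolant_flip_psi (u : 'I_m) (s : 'I_n -> bool) (r : 'I_m -> bool)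
  (h0 : monotone s (mark r u false)) (h1 : monotone s (mark r u true)) :
  xi u = i -> dinatural_in psi u -> interpolant h0 = interpolant h1.
Proof.
move=> hu Du.
pose hz z : monotone s (mark r u z) :=
  if z as z' return monotone s (mark r u z') then h1 else h0.
rewrite /interpolant !comp_assoc; congr (comp (comp _ _) _); rewrite -!comp_assoc.
apply: (dinatural_in_context (V := fun z => marked xi (mark r u z))
  (fin := fun z j => midslot (ej j) (hz z j))
  (gout := fun z j => outslot (xi (theta j)) (gamma j) (mark r u z (theta j)))
  (fr := fun j => sval (midslot_factor_tgt j hu h0 h1))
  (gr := fun j => sval (outslot_factor A f gamma theta r j hu))
  (fun z => marked_mark A X Y r z hu) Du).
- by move=> z j; apply: (svalP (midslot_factor_tgt j hu h0 h1)).
- by move=> z j; apply: (svalP (outslot_factor A f gamma theta r j hu)).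
Qed.

Lemma chain_congr (V V' : 'I_n -> Ob B) (W W' : 'I_m -> Ob B)
  (fin : forall j, vHom B (alpha j) (BIn (zeta (sigma j)) (alpha j)) (V (sigma j)))
  (fin' : forall j, vHom B (alpha j) (BIn (zeta (sigma j)) (alpha j)) (V' (sigma j)))
  (g : forall j, vHom B (beta j) (V (tau j)) (W (eta j)))
  (g' : forall j, vHom B (beta j) (V' (tau j)) (W' (eta j)))
  (h : forall j, vHom B (gamma j) (W (theta j)) (BOut (xi (theta j)) (gamma j)))
  (h' : forall j, vHom B (gamma j) (W' (theta j)) (BOut (xi (theta j)) (gamma j))) :
  V = V' -> W = W' -> (forall j, JMeq (fin j) (fin' j)) ->
  (forall j, JMeq (g j) (g' j)) -> (forall j, JMeq (h j) (h' j)) ->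
  comp (fmor H h) (comp (psi W) (comp (fmor G g) (comp (phi V) (fmor F fin)))) =
  comp (fmor H h') (comp (psi W') (comp (fmor G g') (comp (phi V') (fmor F fin')))).
Proof.
move=> eV eW; case: _ / eV in fin' g' *; case: _ / eW in g' h' * => hf hg hh.
by rewrite (vfamily_JMeq hf) (vfamily_JMeq hg) (vfamily_JMeq hh).
Qed.

Lemma interpolant_ext (s s' : 'I_n -> bool) (r r' : 'I_m -> bool)
  (hm : monotone s r) (hm' : monotone s' r') :
  (forall k, zeta k == i -> s k = s' k) -> (forall k, xi k == i -> r k = r' k) ->
  interpolant hm = interpolant hm'.
Proof.
move=> hs hr; apply: chain_congr.
- apply: functional_extensionality => k; rewrite /marked /obL.
  by case E: (zeta k == i); rewrite // (hs k E).
- apply: functional_extensionality => k; rewrite /marked /obL.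
  by case E: (xi k == i); rewrite // (hr k E).
- by move=> j; apply: inslot_ext => /hs.
- move=> j; apply: midslot_ext => E; split; first exact: hs.
  by apply: hr; rewrite -(ej j).
- by move=> j; apply: outslot_ext => /hr.
Qed.

Definition pending (s : 'I_n -> bool) (r : 'I_m -> bool) : nat :=
  #|[set k | (zeta k == i) && ~~ s k]| + #|[set k | (xi k == i) && ~~ r k]|.

Lemma interpolant_done (s : 'I_n -> bool) (r : 'I_m -> bool) (hm : monotone s r) :
  pending s r = 0 -> interpolant hm = interpolant (monotone_const true).
Proof.
rewrite /pending => /eqP; rewrite addn_eq0 => /andP [/eqP ps /eqP pr].
apply: interpolant_ext => k hk; apply/negPn/negP => hnot.
  by move/setP/(_ k): (cards0_eq ps); rewrite !inE hk hnot.
by move/setP/(_ k): (cards0_eq pr); rewrite !inE hk hnot.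
Qed.

Lemma monotone_flip_phi (s : 'I_n -> bool) (r : 'I_m -> bool) (t : 'I_n) :
  monotone s r -> (forall j, tau j = t -> beta j -> r (eta j)) ->
  monotone (mark s t true) r.
Proof.
move=> hm hsucc j hj; rewrite /mark; case: (eqVneq (tau j) t) => [Et|_]; last exact: hm.
rewrite /le_var; case Eb: (beta j); first by rewrite (hsucc j Et Eb).
by case: (r (eta j)).
Qed.

Lemma monotone_flip_psi (s : 'I_n -> bool) (r : 'I_m -> bool) (u : 'I_m) :
  monotone s r -> (forall j, eta j = u -> ~~ beta j -> s (tau j)) ->
  monotone s (mark r u true).
Proof.
move=> hm hsucc j hj; rewrite /mark; case: (eqVneq (eta j) u) => [Eu|_]; last exact: hm.
rewrite /le_var; case Eb: (beta j); first by case: (s (tau j)).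
by rewrite (hsucc j Eu (negbT Eb)).
Qed.

Lemma flippable (s : 'I_n -> bool) (r : 'I_m -> bool) :
  component_acyclic alpha beta gamma sigma tau eta theta zeta xi i ->
  0 < pending s r ->
  (exists t, [/\ zeta t = i, s t = false & forall j, tau j = t -> beta j -> r (eta j)]) \/
  (exists u, [/\ xi u = i, r u = false & forall j, eta j = u -> ~~ beta j -> s (tau j)]).
Proof.
move=> acyc hpos.
set e := cedge alpha beta gamma sigma tau eta theta.
pose waiting (v : ('I_a + 'I_b + 'I_c) + ('I_n + 'I_m)) : bool :=
  match v with
  | inr (inl t) => (zeta t == i) && ~~ s t
  | inr (inr u) => (xi u == i) && ~~ r u
  | inl _ => false
  end.
have acyc' v w : waiting v -> e v w -> ~~ connect e w v.
  move=> wv; apply: acyc; exists v; split; last exact: connect0.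
  by case: v wv => [//|[t|u]] /andP [].
have [v0 wv0] : exists v, waiting v.
  move: hpos; rewrite /pending addn_gt0 => /orP [] /card_gt0P [k];
    rewrite inE => hk; [by exists (inr (inl k)) | by exists (inr (inr k))].
have [[//|[t|u]] /= /andP [/eqP ht /negbTE hs] sink] := acyclic_min_source acyc' wv0.
  left; exists t; split=> // j Et Eb; apply/negPn/negP => hr.
  have := sink (inl (inl (inr j))) (inr (inr (eta j))).
  by rewrite /e /= -(ej j) Et ht Eb hr !eqxx => /(_ isT isT).
right; exists u; split=> // j Eu Eb; apply/negPn/negP => hs'.
have := sink (inl (inl (inr j))) (inr (inl (tau j))).
by rewrite /e /= (ej j) Eu ht Eb hs' !eqxx => /(_ isT isT).
Qed.

Lemma card_pending_mark N (lab : 'I_N -> 'I_l) (s : 'I_N -> bool) (t : 'I_N) :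
  lab t = i -> s t = false ->
  #|[set k | (lab k == i) && ~~ mark s t true k]| < #|[set k | (lab k == i) && ~~ s k]|.
Proof.
move=> ht hst; apply: proper_card; apply/properP; split.
  by apply/subsetP => k; rewrite !inE /mark; case: (k == t); rewrite ?andbF.
by exists t; rewrite !inE /mark ?ht ?hst ?eqxx.
Qed.

Section Flipping.
Hypotheses (Dn : forall x : 'I_n, zeta x = i -> dinatural_in phi x)
  (Dm : forall y : 'I_m, xi y = i -> dinatural_in psi y)
  (acyc : component_acyclic alpha beta gamma sigma tau eta theta zeta xi i).

Lemma interpolant_to_done (k : nat) (s : 'I_n -> bool) (r : 'I_m -> bool)
  (hm : monotone s r) :
  pending s r <= k -> interpolant hm = interpolant (monotone_const true).
Proof.
elim: k s r hm => [|k IH] s r hm hk.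
  by apply: interpolant_done; apply/eqP; rewrite -leqn0.
have [p0|ppos] := posnP (pending s r); first exact: interpolant_done.
have [[t [ht hst hsucc]]|[u [hu hru hsucc]]] := flippable acyc ppos.
- have h0 : monotone (mark s t false) r by rewrite -hst mark_id.
  have h1 := monotone_flip_phi hm hsucc.
  have -> : interpolant hm = interpolant h0.
    by apply: interpolant_ext => // k' _; rewrite -hst mark_id.
  rewrite (interpolant_flip_phi h0 h1 ht (Dn ht)); apply: IH.
  by rewrite -ltnS (leq_trans _ hk) // /pending ltn_add2r card_pending_mark.
- have h0 : monotone s (mark r u false) by rewrite -hru mark_id.
  have h1 := monotone_flip_psi hm hsucc.
  have -> : interpolant hm = interpolant h0.
    by apply: interpolant_ext => // k' _; rewrite -hru mark_id.
  rewrite (interpolant_flip_psi h0 h1 hu (Dm hu)); apply: IH.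
  by rewrite -ltnS (leq_trans _ hk) // /pending ltn_add2l card_pending_mark.
Qed.

Lemma composite_sides_agree : side f (vcompT Hc phi psi) i A false =
                              side f (vcompT Hc phi psi) i A true.
Proof.
rewrite -!interpolant_const.
exact: (interpolant_to_done (monotone_const false) (leqnn _)).
Qed.

End Flipping.
End Composite.

Theorem mainTheorem3 (B C : Category)
  (a : nat) (alpha : 'I_a -> bool) (b : nat) (beta : 'I_b -> bool)
  (c : nat) (gamma : 'I_c -> bool)
  (F : MFunctor B C alpha) (G : MFunctor B C beta) (H : MFunctor B C gamma)
  (n m l : nat) (sigma : 'I_a -> 'I_n) (tau : 'I_b -> 'I_n)
  (eta : 'I_b -> 'I_m) (theta : 'I_c -> 'I_m)
  (phi : transf F G sigma tau) (psi : transf G H eta theta)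
  (zeta : 'I_n -> 'I_l) (xi : 'I_m -> 'I_l)
  (Hc : (fun j => zeta (tau j)) = (fun j => xi (eta j)))
  (Hpo : is_pushout tau eta zeta xi)
  (i : 'I_l) :
  (forall x : 'I_n, zeta x = i -> dinatural_in phi x) ->
  (forall y : 'I_m, xi y = i -> dinatural_in psi y) ->
  component_acyclic alpha beta gamma sigma tau eta theta zeta xi i ->
  dinatural_in (vcompT Hc phi psi) i.
Proof.
move=> Dn Dm acyc A X Y f.
exact: (composite_sides_agree Hc A f Dn Dm acyc).
Qed.
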